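(* Let $1\le k\le m$ and let $\phi_{m,k}$ be the automorphism of the free group $F_{m+k}=F(A_1,\dots,A_m,B_1,\dots,B_k)$ described below. Then $\operatorname{gr}_{\phi_{m,k}}(n)\preceq n^k$ and $\operatorname{gr}_{(\phi_{m,k})^{-1}}(n)\preceq n^k$.
   Context: $\phi_{m,k}(A_i)=A_1\cdots A_{i-1}A_iA_{i-1}^{-1}\cdots A_1^{-1}$ for $1\le i\le m$, and $\phi_{m,k}(B_j)=A_1\cdots A_m(B_1\cdots B_j)A_{j-1}^{-1}\cdots A_1^{-1}$ for $1\le j\le k$. $\operatorname{gr}_\psi(n)=\max_{x}\|\psi^n(x)\|$ over the free basis, $\|\cdot\|$ being word length. $f\preceq g$ means $f(n)\le Ag(n)+B$ for some $A>0,B\ge0$ and all $n$. *)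

From mathcomp Require Import all_boot.
Set Implicit Arguments. Unset Strict Implicit. Unset Printing Implicit Defensive.

(* a letter (g, b) is x_g if b = false and x_g^{-1} if b = true *)
Definition letter := (nat * bool)%type.
Definition word := seq letter.

Definition inv_letter (x : letter) : letter := (x.1, ~~ x.2).
Definition inv_word (w : word) : word := rev (map inv_letter w).

Definition cons_red (x : letter) (acc : word) : word :=
  if acc is y :: t then (if y == inv_letter x then t else x :: acc) else [:: x].
Definition reduce (w : word) : word := foldr cons_red [::] w.

Definition endo := nat -> word.
Definition apply_endo (f : endo) (w : word) : word :=
  reduce (flatten (map (fun x : letter => if x.2 then inv_word (f x.1) else f x.1) w)).

Definition gen (g : nat) : word := [:: (g, false)].

Definition gr (f : endo) (r : nat) (n : nat) : nat :=
  \max_(i < r) size (iter n (apply_endo f) (gen i)).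

Definition growth_le_poly (G : nat -> nat) (k : nat) : Prop :=
  exists A B : nat, forall n, G n <= A * n ^ k + B.

Definition is_inverse_endo (f psi : endo) : Prop :=
  forall g, apply_endo psi (apply_endo f (gen g)) = gen g /\
            apply_endo f (apply_endo psi (gen g)) = gen g.

(* In F(A_1..A_m, B_1..B_k): A_i = x_{i-1}, B_j = x_{m+j-1}. *)
Definition Aseq (i : nat) : word := flatten [seq gen t | t <- iota 0 i].
Definition Bseq (m j : nat) : word := flatten [seq gen (m + t) | t <- iota 0 j].

(* phi_{m,k}: A_i |-> A_1..A_{i-1} A_i A_{i-1}^{-1}..A_1^{-1},
   B_j |-> A_1..A_m (B_1..B_j) A_{j-1}^{-1}..A_1^{-1};
   generators of index >= m+k (outside F_{m+k}) are fixed. *)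
Definition phi (m k : nat) : endo := fun g =>
  if g < m then Aseq g ++ gen g ++ inv_word (Aseq g)
  else if g < m + k then Aseq m ++ Bseq m (g - m).+1 ++ inv_word (Aseq (g - m))
  else gen g.

From Pilot Require Import Defs.
From mathcomp Require Import all_boot zify.
From Stdlib Require Import Setoid Morphisms.
Set Implicit Arguments. Unset Strict Implicit. Unset Printing Implicit Defensive.

(* Under phi, and under any left inverse psi of phi, the n-th iterate of A_i is A_i
   conjugated by A_1^(+-n) ... A_(i-1)^(+-n), and that of B_1 is A_1^(+-n) ... A_m^(+-n) B_1,
   so both have linear length.  Both maps send B_(j+1) to u B_(j+1) v, where the iterates
   of u and v are controlled by those of B_j and of the prefixes A_1 ... A_t; hence
   |f^(n+1)(B_(j+1))| <= |f^n(B_(j+1))| + O(n^j), and summing over n raises the degree by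
   one, so |f^n(B_j)| = O(n^j).  An inverse of phi is written down explicitly. *)

Lemma inv_letterK : involutive inv_letter.
Proof. by case=> g b; rewrite /inv_letter negbK. Qed.

Lemma inv_wordK : involutive inv_word.
Proof. by move=> w; rewrite /inv_word map_rev revK (mapK inv_letterK). Qed.

Lemma inv_word_cat u v : inv_word (u ++ v) = inv_word v ++ inv_word u.
Proof. by rewrite /inv_word map_cat rev_cat. Qed.

Lemma inv_word_cons x u : inv_word (x :: u) = inv_word u ++ [:: inv_letter x].
Proof. by rewrite /inv_word /= rev_cons cats1. Qed.

Lemma size_inv_word u : size (inv_word u) = size u.
Proof. by rewrite /inv_word size_rev size_map. Qed.

Definition reduced (w : word) : bool := sorted (fun x y => y != inv_letter x) w.

Lemma reduced_cons_red x w : reduced w -> reduced (cons_red x w).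
Proof.
rewrite /reduced; case: w => [|y t] //= red_yt.
by case: eqP => [_|/eqP ne] /=; [exact: path_sorted red_yt | rewrite ne].
Qed.

Lemma reduced_foldr r u : reduced r -> reduced (foldr cons_red r u).
Proof. by move=> red_r; elim: u => //= x u; apply: reduced_cons_red. Qed.

Lemma reduced_reduce w : reduced (reduce w).
Proof. exact: reduced_foldr. Qed.

Lemma cons_redK x w : reduced w -> cons_red x (cons_red (inv_letter x) w) = w.
Proof.
rewrite /reduced; case: w => [|y t] /=; first by rewrite eqxx.
rewrite inv_letterK; case: (eqVneq y x) => [->|ne] /=; last by rewrite eqxx.
by case: t => [|z t] //= /andP[/negbTE ->].
Qed.

Lemma foldr_cons_red_reduce r u :
  reduced r -> foldr cons_red r (reduce u) = foldr cons_red r u.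
Proof.
move=> red_r; elim: u => //= x u <-; rewrite /reduce /=.
case: (foldr cons_red [::] u) => [|y t] //=.
by case: eqP => [->|] //=; rewrite cons_redK //; apply: reduced_foldr.
Qed.

Lemma reduceK w : reduce (reduce w) = reduce w.
Proof. exact: foldr_cons_red_reduce. Qed.

Lemma reduce_cat u v : reduce (u ++ v) = reduce (reduce u ++ reduce v).
Proof.
rewrite /reduce !foldr_cat -/(reduce v) -/(reduce (reduce v)) reduceK.
by rewrite foldr_cons_red_reduce ?reduced_reduce.
Qed.

Lemma size_cons_red x w : size (cons_red x w) <= (size w).+1.
Proof. by case: w => [|y t] //=; case: eqP => //= _; apply: leqW. Qed.

Lemma size_reduce w : size (reduce w) <= size w.
Proof. by elim: w => //= x w IH; apply: leq_trans (size_cons_red _ _) _. Qed.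

Lemma foldr_cons_red_catV r u : reduced r -> foldr cons_red r (u ++ inv_word u) = r.
Proof.
elim: u r => //= x u IH r red_r.
by rewrite inv_word_cons catA foldr_cat IH /= ?cons_redK ?reduced_cons_red.
Qed.

Definition eqw (u v : word) : Prop := reduce u = reduce v.
Infix "=w" := eqw (at level 70).

#[export] Instance eqw_Equivalence : Equivalence eqw.
Proof. by split; rewrite /eqw => // u v w -> ->. Qed.

#[export] Instance cat_eqw : Proper (eqw ==> eqw ==> eqw) (@cat letter).
Proof. by move=> u u' Hu v v' Hv; rewrite /eqw reduce_cat Hu Hv -reduce_cat. Qed.

Lemma reduce_eqw w : reduce w =w w.
Proof. exact: reduceK. Qed.

Lemma catwV u : u ++ inv_word u =w [::].
Proof. exact: foldr_cons_red_catV. Qed.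

Lemma catVw u : inv_word u ++ u =w [::].
Proof. by rewrite -{2}(inv_wordK u) catwV. Qed.

Lemma catKw u v : inv_word u ++ u ++ v =w v.
Proof. by rewrite catA catVw. Qed.

Lemma catVKw u v : u ++ inv_word u ++ v =w v.
Proof. by rewrite catA catwV. Qed.

Lemma inv_word_reduce u : inv_word (reduce u) =w inv_word u.
Proof.
transitivity (inv_word (reduce u) ++ u ++ inv_word u); first by rewrite catwV cats0.
have E : inv_word (reduce u) ++ u =w inv_word (reduce u) ++ reduce u.
  by rewrite /eqw [RHS]reduce_cat reduceK -reduce_cat.
by rewrite catA E catVw.
Qed.

#[export] Instance inv_word_eqw : Proper (eqw ==> eqw) inv_word.
Proof. by move=> u v Huv; rewrite -inv_word_reduce Huv inv_word_reduce. Qed.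

Lemma eqw_cat_solve a y b c : a ++ y ++ b =w c -> y =w inv_word a ++ c ++ inv_word b.
Proof. by move=> <-; rewrite -!catA catKw catwV cats0. Qed.

Definition img (f : endo) (x : letter) : word :=
  if x.2 then inv_word (f x.1) else f x.1.
Definition subst (f : endo) (w : word) : word := flatten (map (img f) w).

Lemma subst_cat f u v : subst f (u ++ v) = subst f u ++ subst f v.
Proof. by rewrite /subst map_cat flatten_cat. Qed.

Lemma subst_cons f x w : subst f (x :: w) = img f x ++ subst f w.
Proof. by []. Qed.

Lemma subst_gen f g : subst f (gen g) = f g.
Proof. exact: cats0. Qed.

Lemma img_inv f x : img f (inv_letter x) = inv_word (img f x).
Proof. by case: x => g [] //=; rewrite /img /= inv_wordK. Qed.

Lemma subst_inv f u : subst f (inv_word u) = inv_word (subst f u).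
Proof.
elim: u => // x u IH.
by rewrite inv_word_cons subst_cat IH !subst_cons inv_word_cat img_inv cats0.
Qed.

Lemma subst_reduce f w : subst f (reduce w) =w subst f w.
Proof.
elim: w => //= x w IH; rewrite -/(reduce w).
transitivity (img f x ++ subst f (reduce w)); last by rewrite IH.
case: (reduce w) => [|y t] //=; case: eqP => [->|_] //.
by rewrite /subst /= -/(subst f t) img_inv catVKw.
Qed.

#[export] Instance subst_eqw f : Proper (eqw ==> eqw) (subst f).
Proof. by move=> u v Huv; rewrite -subst_reduce Huv subst_reduce. Qed.

Lemma apply_endo_eqw f w : apply_endo f w =w subst f w.
Proof. exact: reduce_eqw. Qed.

Lemma apply_endo_comp_gen f h g :
  apply_endo f (apply_endo h (gen g)) = reduce (subst f (h g)).
Proof. by rewrite -[h g]subst_gen; apply: subst_reduce. Qed.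

Section Iterates.
Variable f : endo.
Local Notation fn n := (iter n (apply_endo f)).

#[export] Instance iter_apply_endo_eqw n : Proper (eqw ==> eqw) (fn n).
Proof. by elim: n => // n IH u v Huv; rewrite /= !apply_endo_eqw Huv. Qed.

Lemma iter_apply_endo_cat n u v : fn n (u ++ v) =w fn n u ++ fn n v.
Proof. by elim: n => //= n IH; rewrite !apply_endo_eqw IH subst_cat. Qed.

Lemma iter_apply_endo_inv n u : fn n (inv_word u) =w inv_word (fn n u).
Proof. by elim: n => //= n IH; rewrite !apply_endo_eqw IH subst_inv. Qed.

Definition iter_len n w := size (reduce (fn n w)).

Lemma iter_len_eqw n u v : u =w v -> iter_len n u = iter_len n v.
Proof. by move=> /(iter_apply_endo_eqw n); rewrite /iter_len /eqw => ->. Qed.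

Lemma iter_len_le n w v : fn n w =w v -> iter_len n w <= size v.
Proof. by rewrite /iter_len /eqw => ->; apply: size_reduce. Qed.

Lemma iter_len_cat n u v : iter_len n (u ++ v) <= iter_len n u + iter_len n v.
Proof.
rewrite {2 3}/iter_len -size_cat; apply: iter_len_le.
by rewrite iter_apply_endo_cat !reduce_eqw.
Qed.

Lemma iter_len_inv n u : iter_len n (inv_word u) = iter_len n u.
Proof.
have le w : iter_len n (inv_word w) <= iter_len n w.
  rewrite {2}/iter_len -size_inv_word; apply: iter_len_le.
  by rewrite iter_apply_endo_inv reduce_eqw.
by apply/eqP; rewrite eqn_leq le -{1}(inv_wordK u) le.
Qed.

Lemma iter_len_subst n w : iter_len n (subst f w) = iter_len n.+1 w.
Proof.
rewrite [RHS]/iter_len iterSr -/(iter_len n _).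
by apply: iter_len_eqw; rewrite apply_endo_eqw.
Qed.

Lemma gr_iter_len r n : gr f r n = \max_(i < r) iter_len n (gen i).
Proof. by apply: eq_bigr => i _; case: n => [|n] //; rewrite /iter_len /= reduceK. Qed.

End Iterates.

Lemma leq_exp2rW m n e : m <= n -> m ^ e <= n ^ e.
Proof. by move=> mn; elim: e => // e IH; rewrite !expnS leq_mul. Qed.

Section PolynomialGrowth.
Implicit Types (u v : nat -> nat) (e : nat).

Lemma growth_le_poly_le u v e :
  (forall n, u n <= v n) -> growth_le_poly v e -> growth_le_poly u e.
Proof. by move=> uv [A [B HB]]; exists A, B => n; apply: leq_trans (uv n) (HB n). Qed.

Lemma growth_le_polyD u v e :
  growth_le_poly u e -> growth_le_poly v e -> growth_le_poly (fun n => u n + v n) e.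
Proof.
move=> [A [B Hu]] [A' [B' Hv]]; exists (A + A'), (B + B') => n.
by rewrite mulnDl addnACA leq_add.
Qed.

Lemma growth_le_poly_widen u e e' :
  e <= e' -> growth_le_poly u e -> growth_le_poly u e'.
Proof.
move=> ee' [A [B Hu]]; exists A, (A + B) => n; apply: leq_trans (Hu n) _.
have pow : n ^ e <= n ^ e' + 1.
  case: n => [|n]; last by rewrite addn1 leqW // leq_pexp2l.
  by apply: leq_trans (leq_addl (0 ^ e') 1); case: (e) => [|?] //; rewrite exp0n.
by rewrite addnA leq_add2r -[A in _ + A]muln1 -mulnDr leq_mul2l pow orbT.
Qed.

Lemma growth_le_poly_shift u e :
  growth_le_poly u e -> growth_le_poly (fun n => u n.+1) e.
Proof.
move=> [A [B Hu]]; exists (A * 2 ^ e), (A + B) => n; apply: leq_trans (Hu _) _.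
have pow : n.+1 ^ e <= (2 * n) ^ e + 1.
  case: n => [|n]; first by rewrite exp1n leq_addl.
  by rewrite addn1 leqW // leq_exp2rW //; lia.
by rewrite addnA leq_add2r -mulnA -expnMn -[A in _ + A]muln1 -mulnDr leq_mul2l pow orbT.
Qed.

Lemma growth_le_poly_telescope u v e :
  (forall n, u n.+1 <= u n + v n) -> growth_le_poly v e -> growth_le_poly u e.+1.
Proof.
move=> uv [A [B Hv]]; exists (A + B), (u 0) => n.
have partial_sums : u n <= u 0 + n * (A * n ^ e + B).
  elim: n => [|n IH]; first by rewrite addn0.
  apply: leq_trans (uv n) _; rewrite mulSn addnCA addnC leq_add //.
    by apply: leq_trans (Hv n) _; rewrite leq_add2r leq_mul2l leq_exp2rW ?orbT.
  by apply: leq_trans IH _; rewrite leq_add2l leq_mul2l leq_add2r leq_mul2l leq_exp2rW ?orbT.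
apply: leq_trans partial_sums _; rewrite addnC leq_add2r mulnDr mulnCA -expnS mulnDl leq_add2l.
rewrite mulnC leq_mul2l; apply/orP; right.
by case: n => [|n] //; rewrite -{1}(expn1 n.+1) leq_pexp2l.
Qed.

Lemma growth_le_poly_bigmax r (u : nat -> nat -> nat) e :
  (forall i, i < r -> growth_le_poly (u i) e) ->
  growth_le_poly (fun n => \max_(i < r) u i n) e.
Proof.
elim: r => [|r IH] ur; first by exists 0, 0 => n; rewrite big_ord0.
apply: growth_le_poly_le (growth_le_polyD (IH _) (ur r _)) => // [n|i ir].
  by rewrite big_ord_recr /= geq_max leq_addr leq_addl.
exact: ur (ltnW ir).
Qed.

End PolynomialGrowth.

Lemma Aseq_S t : Aseq t.+1 = Aseq t ++ gen t.
Proof. by rewrite /Aseq -addn1 iotaD map_cat flatten_cat /= add0n. Qed.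

Lemma Bseq_S m j : Defs.Bseq m j.+1 = Defs.Bseq m j ++ gen (m + j).
Proof. by rewrite /Defs.Bseq -addn1 iotaD map_cat flatten_cat /= add0n. Qed.

Section IteratedGrowth.
Variable f : endo.
Local Notation len w := (fun n => iter_len f n w).

Lemma growth_iter_len_cat u v e :
  growth_le_poly (len u) e -> growth_le_poly (len v) e -> growth_le_poly (len (u ++ v)) e.
Proof. by move=> gu gv; apply: growth_le_poly_le (growth_le_polyD gu gv) => n; apply: iter_len_cat. Qed.

Lemma growth_iter_len_inv u e :
  growth_le_poly (len u) e -> growth_le_poly (len (inv_word u)) e.
Proof. by apply: growth_le_poly_le => n; rewrite iter_len_inv. Qed.

Lemma growth_iter_len_subst w e :
  growth_le_poly (len w) e -> growth_le_poly (len (subst f w)) e.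
Proof.
by move=> /growth_le_poly_shift; apply: growth_le_poly_le => n; rewrite iter_len_subst.
Qed.

Lemma growth_iter_len_Aseq t e :
  (forall s, s < t -> growth_le_poly (len (gen s)) e) -> growth_le_poly (len (Aseq t)) e.
Proof.
elim: t => [|t IH] gA; first by exists 0, 0 => n; rewrite /iter_len iter_fix.
by rewrite Aseq_S; apply: growth_iter_len_cat; [apply: IH => s /ltnW | ]; apply: gA.
Qed.

Lemma growth_iter_len_closed_form w (c : nat -> word) e :
  (forall n, iter n (apply_endo f) w =w c n) ->
  growth_le_poly (fun n => size (c n)) e -> growth_le_poly (len w) e.
Proof. by move=> fc; apply: growth_le_poly_le => n; apply: iter_len_le. Qed.

Lemma growth_iter_len_step g u v e :
  f g =w u ++ gen g ++ v -> growth_le_poly (len u) e -> growth_le_poly (len v) e ->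
  growth_le_poly (len (gen g)) e.+1.
Proof.
move=> fg gu gv; apply: growth_le_poly_telescope (growth_le_polyD gu gv) => n.
rewrite -iter_len_subst subst_gen (iter_len_eqw _ _ fg) addnCA.
by apply: leq_trans (iter_len_cat _ _ _ _) _; rewrite leq_add2l iter_len_cat.
Qed.

End IteratedGrowth.

Section TriangularGrowth.
Variables (f : endo) (m k : nat).
Local Notation len w := (fun n => iter_len f n w).
Hypothesis growth_A : forall i, i < m -> growth_le_poly (len (gen i)) 1.

Lemma growth_Aseq t e : t <= m -> 0 < e -> growth_le_poly (len (Aseq t)) e.
Proof.
move=> tm e_gt0; apply: growth_iter_len_Aseq => s st.
by apply: growth_le_poly_widen e_gt0 (growth_A _); apply: leq_trans tm.
Qed.

Hypothesis growth_B0 : growth_le_poly (len (gen m)) 1.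
Hypothesis growth_BS : forall j, j.+1 < k ->
  growth_le_poly (len (gen (m + j))) j.+1 -> growth_le_poly (len (gen (m + j.+1))) j.+2.

Lemma growth_le_poly_gr : 0 < k -> growth_le_poly (gr f (m + k)) k.
Proof.
move=> k_gt0.
have growth_B j : j < k -> growth_le_poly (len (gen (m + j))) j.+1.
  elim: j => [|j IH] jk; first by rewrite addn0.
  exact: growth_BS jk (IH (ltnW jk)).
apply: growth_le_poly_le (growth_le_poly_bigmax (u := fun i n => iter_len f n (gen i)) _).
  by move=> n; rewrite gr_iter_len.
move=> i ilt; case: (ltnP i m) => [im|mi].
  exact: growth_le_poly_widen k_gt0 (growth_A im).
rewrite -(subnKC mi); apply: growth_le_poly_widen (growth_B _ _); lia.
Qed.

End TriangularGrowth.

Lemma subst_nseq_conj f x p n :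
  img f x = p ++ [:: x] ++ inv_word p -> subst f (nseq n x) =w p ++ nseq n x ++ inv_word p.
Proof.
move=> fx; elim: n => [|n IH]; first by rewrite catwV.
by rewrite /= subst_cons fx IH -!catA catKw.
Qed.

Lemma nseqSr (x : letter) n : nseq n.+1 x = nseq n x ++ [:: x].
Proof. by rewrite -addn1 nseqD. Qed.

Fixpoint Apow (j n : nat) (b : bool) : word :=
  if j is j'.+1 then Apow j' n b ++ nseq n (j', b) else [::].

Lemma Apow_S j n b : Apow j.+1 n b = Apow j n b ++ nseq n (j, b).
Proof. by []. Qed.

Lemma Apow0 j b : Apow j 0 b = [::].
Proof. by elim: j => //= j ->. Qed.

Lemma size_Apow j n b : size (Apow j n b) = j * n.
Proof. by elim: j => //= j IH; rewrite size_cat IH size_nseq mulSn addnC. Qed.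

Section ApowGrowth.
Variable f : endo.
Local Notation len w := (fun n => iter_len f n w).

Lemma growth_iter_len_Apow_conj i b :
  (forall n, iter n (apply_endo f) (gen i) =w Apow i n b ++ gen i ++ inv_word (Apow i n b)) ->
  growth_le_poly (len (gen i)) 1.
Proof.
move=> fn; apply: growth_iter_len_closed_form fn _.
by exists (2 * i), 1 => n; rewrite !size_cat size_inv_word size_Apow /= expn1; lia.
Qed.

Lemma growth_iter_len_Apow_cat j b :
  (forall n, iter n (apply_endo f) (gen j) =w Apow j n b ++ gen j) ->
  growth_le_poly (len (gen j)) 1.
Proof.
move=> fn; apply: growth_iter_len_closed_form fn _.
by exists j, 1 => n; rewrite size_cat size_Apow /= expn1 addn1.
Qed.

End ApowGrowth.

Section Phi.
Variables m k : nat.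
Hypothesis k_gt0 : 0 < k.
Hypothesis k_le_m : k <= m.
Local Notation phi := (phi m k).

Lemma phiA i : i < m -> phi i = Aseq i ++ gen i ++ inv_word (Aseq i).
Proof. by rewrite /phi => ->. Qed.

Lemma phiB j : j < k -> phi (m + j) = Aseq m ++ Defs.Bseq m j.+1 ++ inv_word (Aseq j).
Proof. by move=> jk; rewrite /phi ltnNge leq_addr ltn_add2l jk addKn. Qed.

Lemma phiB0 : phi m = Aseq m ++ gen m.
Proof. by rewrite -[m in phi m]addn0 phiB // /Defs.Bseq /= addn0. Qed.

Lemma phiBS j : j.+1 < k ->
  phi (m + j.+1) =w (phi (m + j) ++ Aseq j) ++ gen (m + j.+1) ++ inv_word (Aseq j.+1).
Proof.
by move=> jk; rewrite !phiB ?(ltnW jk) // Bseq_S Aseq_S inv_word_cat -!catA catKw.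
Qed.

Lemma phi_out g : m + k <= g -> phi g = gen g.
Proof. by move=> kg; rewrite /phi ltnNge (leq_trans (leq_addr k m) kg) ltnNge kg. Qed.

Lemma img_phiA i b : i < m -> img phi (i, b) = Aseq i ++ [:: (i, b)] ++ inv_word (Aseq i).
Proof.
move=> im; rewrite /img /= phiA //; case: b => //.
by rewrite !inv_word_cat inv_wordK -catA.
Qed.

Lemma subst_phi_Apow j n :
  j <= m -> subst phi (Apow j n false) =w Apow j n.+1 false ++ inv_word (Aseq j).
Proof.
elim: j => [|j IH] jm //; rewrite !Apow_S.
rewrite subst_cat IH ?(ltnW jm) // (subst_nseq_conj _ (img_phiA _ jm)) -!catA catKw.
by rewrite Aseq_S inv_word_cat nseqSr -!catA catVKw.
Qed.

Lemma subst_phi_Apow_inv j n :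
  j <= m -> subst phi (Apow j n.+1 true) =w Apow j n true ++ inv_word (Aseq j).
Proof.
elim: j => [|j IH] jm //; rewrite !Apow_S.
rewrite subst_cat IH ?(ltnW jm) // (subst_nseq_conj _ (img_phiA _ jm)) -!catA catKw.
by rewrite Aseq_S inv_word_cat nseqSr -!catA.
Qed.

Lemma iter_phiA i n : i < m ->
  iter n (apply_endo phi) (gen i) =w Apow i n false ++ gen i ++ inv_word (Apow i n false).
Proof.
move=> im; elim: n => [|n IH]; first by rewrite Apow0.
rewrite iterS apply_endo_eqw IH !subst_cat subst_inv subst_gen phiA //.
by rewrite subst_phi_Apow ?(ltnW im) // inv_word_cat inv_wordK -!catA !catKw.
Qed.

Lemma iter_phiB0 n : iter n (apply_endo phi) (gen m) =w Apow m n false ++ gen m.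
Proof.
elim: n => [|n IH]; first by rewrite Apow0.
by rewrite iterS apply_endo_eqw IH subst_cat subst_gen phiB0 subst_phi_Apow // -catA catKw.
Qed.

Lemma growth_phi_A i : i < m -> growth_le_poly (fun n => iter_len phi n (gen i)) 1.
Proof. by move=> im; apply: growth_iter_len_Apow_conj => n; apply: iter_phiA. Qed.

Lemma growth_phi : growth_le_poly (gr phi (m + k)) k.
Proof.
apply: growth_le_poly_gr growth_phi_A _ _ k_gt0 => [|j jk IH].
  exact: growth_iter_len_Apow_cat iter_phiB0.
apply: growth_iter_len_step (phiBS jk) _ _.
  apply: growth_iter_len_cat; last by apply: (growth_Aseq growth_phi_A); lia.
  by rewrite -subst_gen; apply: growth_iter_len_subst.
by apply/growth_iter_len_inv/(growth_Aseq growth_phi_A); lia.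
Qed.

Section LeftInverse.
Variable psi : endo.
Hypothesis psi_phi : forall g, apply_endo psi (apply_endo phi (gen g)) = gen g.

Lemma subst_psi_phi_gen g : subst psi (phi g) =w gen g.
Proof. by have := psi_phi g; rewrite apply_endo_comp_gen. Qed.

Lemma subst_psi_phi w : subst psi (subst phi w) =w w.
Proof.
elim: w => // [[g b] w IH]; rewrite subst_cons subst_cat IH /img /=.
by case: b; rewrite ?subst_inv subst_psi_phi_gen.
Qed.

Lemma subst_psi_of_phi u v : subst phi u =w v -> subst psi v =w u.
Proof. by move=> <-; rewrite subst_psi_phi. Qed.

Lemma iter_psiA i n : i < m ->
  iter n (apply_endo psi) (gen i) =w Apow i n true ++ gen i ++ inv_word (Apow i n true).
Proof.
move=> im; elim: n => [|n IH]; first by rewrite Apow0.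
rewrite iterS apply_endo_eqw IH; apply: subst_psi_of_phi.
rewrite !subst_cat subst_inv subst_gen phiA // subst_phi_Apow_inv ?(ltnW im) //.
by rewrite inv_word_cat inv_wordK -!catA !catKw.
Qed.

Lemma iter_psiB0 n : iter n (apply_endo psi) (gen m) =w Apow m n true ++ gen m.
Proof.
elim: n => [|n IH]; first by rewrite Apow0.
rewrite iterS apply_endo_eqw IH; apply: subst_psi_of_phi.
by rewrite subst_cat subst_gen phiB0 subst_phi_Apow_inv // -catA catKw.
Qed.

Lemma psiBS j : j.+1 < k ->
  psi (m + j.+1) =w inv_word (gen (m + j) ++ subst psi (Aseq j)) ++ gen (m + j.+1) ++
                    subst psi (Aseq j.+1).
Proof.
move=> jk; rewrite -subst_gen -[subst psi (Aseq j.+1)]inv_wordK; apply: eqw_cat_solve.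
rewrite -{2}(subst_psi_phi_gen (m + j.+1)) (phiBS jk) !subst_cat subst_inv.
by rewrite subst_psi_phi_gen -!catA.
Qed.

Lemma growth_psi_A i : i < m -> growth_le_poly (fun n => iter_len psi n (gen i)) 1.
Proof. by move=> im; apply: growth_iter_len_Apow_conj => n; apply: iter_psiA. Qed.

Lemma growth_psi : growth_le_poly (gr psi (m + k)) k.
Proof.
apply: growth_le_poly_gr growth_psi_A _ _ k_gt0 => [|j jk IH].
  exact: growth_iter_len_Apow_cat iter_psiB0.
apply: growth_iter_len_step (psiBS jk) _ _.
  apply/growth_iter_len_inv/growth_iter_len_cat => //.
  by apply/growth_iter_len_subst/(growth_Aseq growth_psi_A); lia.
by apply/growth_iter_len_subst/(growth_Aseq growth_psi_A); lia.
Qed.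

End LeftInverse.

(* Solving [phiBS] for B_(j+1): psi(B_(j+1)) = psi(A_1..A_j)^-1 B_j^-1 B_(j+1) psi(A_1..A_(j+1)),
   where psi(A_1..A_j) = [inv_word (Apow j 1 true)]. *)
Definition phi_inv : endo := fun g =>
  if g < m then Apow g 1 true ++ gen g ++ inv_word (Apow g 1 true)
  else if g == m then Apow m 1 true ++ gen m
  else if g < m + k then
    Apow (g - m).-1 1 true ++ [:: (g.-1, true)] ++ gen g ++ inv_word (Apow (g - m) 1 true)
  else gen g.

Lemma phi_invA i : i < m -> phi_inv i = Apow i 1 true ++ gen i ++ inv_word (Apow i 1 true).
Proof. by rewrite /phi_inv => ->. Qed.

Lemma phi_invB0 : phi_inv m = Apow m 1 true ++ gen m.
Proof. by rewrite /phi_inv ltnn eqxx. Qed.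

Lemma phi_invBS j : j.+1 < k -> phi_inv (m + j.+1) =
  Apow j 1 true ++ inv_word (gen (m + j)) ++ gen (m + j.+1) ++ inv_word (Apow j.+1 1 true).
Proof.
move=> jk; rewrite /phi_inv ltnNge leq_addr /= ltn_add2l jk addKn addnS.
by rewrite gtn_eqF // ltnS leq_addr.
Qed.

Lemma phi_inv_out g : m + k <= g -> phi_inv g = gen g.
Proof.
move=> kg; rewrite /phi_inv ltnNge (leq_trans (leq_addr k m) kg) ltnNge kg /=.
by rewrite gtn_eqF //; lia.
Qed.

Lemma subst_phi_Apow1 j : j <= m -> subst phi (Apow j 1 true) =w inv_word (Aseq j).
Proof. by move=> jm; rewrite subst_phi_Apow_inv // Apow0. Qed.

Lemma subst_phi_inv_Aseq t : t <= m -> subst phi_inv (Aseq t) =w inv_word (Apow t 1 true).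
Proof.
elim: t => [|t IH] tm //; rewrite Aseq_S subst_cat IH ?(ltnW tm) // subst_gen phi_invA //.
by rewrite catKw Apow_S inv_word_cat.
Qed.

Lemma subst_phi_inv_Bseq s : s < k ->
  subst phi_inv (Defs.Bseq m s.+1) =w Apow m 1 true ++ gen (m + s) ++ inv_word (Apow s 1 true).
Proof.
elim: s => [|s IH] sk; rewrite Bseq_S subst_cat subst_gen; first by rewrite addn0 phi_invB0 cats0.
rewrite IH ?(ltnW sk) // phi_invBS // -!catA catKw.
by rewrite (catVKw (gen (m + s))).
Qed.

Lemma phi_phi_inv g : subst phi (phi_inv g) =w gen g.
Proof.
case: (ltnP g m) => [gm|mg].
  rewrite phi_invA // !subst_cat subst_inv subst_gen phiA // subst_phi_Apow1 ?(ltnW gm) //.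
  by rewrite inv_wordK -!catA catKw catVw cats0.
case: (ltnP g (m + k)) => [gk|kg]; last by rewrite phi_inv_out // subst_gen phi_out.
case: (eqVneq g m) => [->|ne_gm].
  by rewrite phi_invB0 subst_cat subst_gen phiB0 subst_phi_Apow1 // catKw.
have [j def_g] : exists j, g = m + j.+1 by exists (g - m).-1; lia.
have jk : j.+1 < k by lia.
subst g; rewrite phi_invBS //.
rewrite !subst_cat !subst_inv !subst_gen !subst_phi_Apow1 ?inv_wordK; try lia.
by rewrite (phiBS jk) -!catA !catKw catVw cats0.
Qed.

Lemma phi_inv_phi g : subst phi_inv (phi g) =w gen g.
Proof.
case: (ltnP g m) => [gm|mg].
  rewrite phiA // !subst_cat subst_inv subst_gen phi_invA // subst_phi_inv_Aseq ?(ltnW gm) //.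
  by rewrite inv_wordK -!catA catKw catVw cats0.
case: (ltnP g (m + k)) => [gk|kg]; last by rewrite phi_out // subst_gen phi_inv_out.
have jk : g - m < k by lia.
rewrite -(subnKC mg) phiB // (subst_cat _ (Aseq m)) (subst_cat _ (Defs.Bseq _ _)).
rewrite subst_inv subst_phi_inv_Bseq //.
rewrite !subst_phi_inv_Aseq ?inv_wordK; try lia.
by rewrite -!catA catKw catVw cats0.
Qed.

Lemma phi_inv_inverse : is_inverse_endo phi phi_inv.
Proof. by move=> g; rewrite !apply_endo_comp_gen; split; [apply: phi_inv_phi | apply: phi_phi_inv]. Qed.

End Phi.

Theorem proposition8p1 (m k : nat) (hk : 1 <= k) (hkm : k <= m) :
  growth_le_poly (gr (phi m k) (m + k)) k /\
  (exists psi : endo, is_inverse_endo (phi m k) psi) /\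
  (forall psi : endo, is_inverse_endo (phi m k) psi ->
     growth_le_poly (gr psi (m + k)) k).
Proof.
split; first exact: growth_phi.
split; first by exists (phi_inv m k); apply: phi_inv_inverse.
by move=> psi inv_psi; apply: (growth_psi hk hkm) => g; case: (inv_psi g).
Qed.
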